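(* For every 3-periodic $P_1P_2P_3$ of $\mathcal{E}$, \[\sum_{i=1}^3\frac{1}{d_{1,i}}=\frac{a^2+b^2+\delta}{ab^2},\] where $d_{1,i}=|P_i-f_1|$. Consequently the sum of distances from $f_1$ to the vertices of the focus-inversive triangle, $\sum_i |P_i^\dagger-f_1|=\rho^2\sum_i 1/d_{1,i}$, is invariant over the family.
   Context: Let $a>b>0$ and let $\mathcal{E}$ be the ellipse $x^2/a^2+y^2/b^2=1$. Set $c=\sqrt{a^2-b^2}$, $\delta=\sqrt{a^4-a^2b^2+b^4}$, and let the foci be $f_1=(-c,0)$, $f_2=(c,0)$. A 3-periodic is a triangle $P_1P_2P_3$ with vertices on $\mathcal{E}$ such that at each vertex the normal to $\mathcal{E}$ bisects the angle formed by the two sides meeting at that vertex; these form a one-parameter family (one through every point of $\mathcal{E}$). Fix $\rho>0$; the focus-inversive triangle has vertices $P_i^\dagger=f_1+(\rho/d_{1,i})^2(P_i-f_1)$. *)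

From Stdlib Require Import Reals Lra.
Open Scope R_scope.

Definition pt := (R * R)%type.

Definition psub (p q : pt) : pt := (fst p - fst q, snd p - snd q).
Definition dot (p q : pt) : R := fst p * fst q + snd p * snd q.
Definition norm (p : pt) : R := sqrt (dot p p).
Definition pdist (p q : pt) : R := norm (psub p q).

Definition on_ellipse (a b : R) (p : pt) : Prop :=
  (fst p)^2 / a^2 + (snd p)^2 / b^2 = 1.

(* outward normal vector to the ellipse at p (gradient of x^2/a^2+y^2/b^2, up to 2) *)
Definition ell_normal (a b : R) (p : pt) : pt := (fst p / a^2, snd p / b^2).

Definition cos_angle (u v : pt) : R := dot u v / (norm u * norm v).

(* At vertex p with neighbours q and r, the normal to the ellipse bisects the
   angle q p r: the normal makes equal angles with the sides p->q and p->r
   (angles in [0,pi] are equal iff their cosines are equal). *)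
Definition normal_bisects (a b : R) (p q r : pt) : Prop :=
  cos_angle (ell_normal a b p) (psub q p) = cos_angle (ell_normal a b p) (psub r p).

Definition three_periodic (a b : R) (P1 P2 P3 : pt) : Prop :=
  on_ellipse a b P1 /\ on_ellipse a b P2 /\ on_ellipse a b P3 /\
  P1 <> P2 /\ P2 <> P3 /\ P1 <> P3 /\
  normal_bisects a b P1 P2 P3 /\
  normal_bisects a b P2 P3 P1 /\
  normal_bisects a b P3 P1 P2.

Definition foc_c (a b : R) : R := sqrt (a^2 - b^2).
Definition delta (a b : R) : R := sqrt (a^4 - a^2 * b^2 + b^4).
Definition f1 (a b : R) : pt := (- foc_c a b, 0).
Definition f2 (a b : R) : pt := (foc_c a b, 0).

Definition focus_inv (a b rho : R) (p : pt) : pt :=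
  let k := (rho / pdist p (f1 a b))^2 in
  (fst (f1 a b) + k * (fst p - fst (f1 a b)), snd (f1 a b) + k * (snd p - snd (f1 a b))).

(* In the coordinates X = x/a, Y = y/b the ellipse is the unit
   circle; write be = b^2/a^2.  The normal at P1 pairs with a side P1 P as minus the
   "half chord" 1 - X1 X - Y1 Y, so the bisector condition says that the ratio
   half chord / side length is the same for the two sides at each vertex, hence for
   all three sides: every side satisfies hchord^2 = k * achord with one constant k
   (a Joachimsthal-type invariant).  On the unit circle this relation is linear in
   the ordinate product, and eliminating the ordinates gives a biquadratic relation
   in the abscissae.  At each vertex the other two abscissae are therefore the roots
   of a quadratic (Vieta); two vertices with distinct abscissae yield the elementary
   symmetric functions of X1, X2, X3 and a Cayley-type condition on k.  That
   condition factors, and for the necessarily admissible range 0 < k < 1 it fixes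
   k in terms of delta.  Since the focal distance is a (1 + e X) (e the eccentricity),
   the sum of reciprocals is a rational function of the symmetric functions, which
   collapses to (a^2 + b^2 + delta)/(a b^2).  The focus-inversive claims follow
   because inversion maps the focal distance d to rho^2 / d. *)

From Stdlib Require Import Reals Lra Psatz.
Open Scope R_scope.

Lemma mult_cancel_l (x y : R) : x <> 0 -> x * y = 0 -> y = 0.
Proof. intros hx hxy. destruct (Rmult_integral _ _ hxy); [contradiction | assumption]. Qed.

Lemma pow2_pos (x : R) : x <> 0 -> 0 < x ^ 2.
Proof. intro hx. replace (x ^ 2) with (x * x) by ring. apply Rsqr_pos_lt, hx. Qed.

(* Half the squared chord between two points of the unit circle:
   2 * hchord = |A - B|^2 when |A| = |B| = 1. *)
Definition hchord (X1 Y1 X2 Y2 : R) : R := 1 - X1 * X2 - Y1 * Y2.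

(* The squared length of the chord of the ellipse, in the normalised coordinates
   X = x/a, Y = y/b, divided by a^2; here be = b^2/a^2. *)
Definition achord (be X1 Y1 X2 Y2 : R) : R := (X1 - X2) ^ 2 + be * (Y1 - Y2) ^ 2.

(* Joachimsthal-type relation: the chord A B satisfies hchord^2 = k * achord.
   For a 3-periodic all three sides satisfy it with the same constant k. *)
Definition joach (be k X1 Y1 X2 Y2 : R) : Prop :=
  hchord X1 Y1 X2 Y2 ^ 2 = k * achord be X1 Y1 X2 Y2.

Section UnitCircleChords.
Variable be : R.

Lemma hchord_sym (X1 Y1 X2 Y2 : R) : hchord X1 Y1 X2 Y2 = hchord X2 Y2 X1 Y1.
Proof. unfold hchord; ring. Qed.

Lemma joach_sym (k X1 Y1 X2 Y2 : R) : joach be k X1 Y1 X2 Y2 -> joach be k X2 Y2 X1 Y1.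
Proof.
  unfold joach, achord. rewrite hchord_sym. intro h. rewrite h. ring.
Qed.

Lemma hchord_half_sq (X1 Y1 X2 Y2 : R) : X1^2 + Y1^2 = 1 -> X2^2 + Y2^2 = 1 ->
  2 * hchord X1 Y1 X2 Y2 = (X1 - X2) ^ 2 + (Y1 - Y2) ^ 2.
Proof. intros c1 c2. unfold hchord. nra. Qed.

Lemma hchord_nonneg (X1 Y1 X2 Y2 : R) : X1^2 + Y1^2 = 1 -> X2^2 + Y2^2 = 1 ->
  0 <= hchord X1 Y1 X2 Y2.
Proof.
  intros c1 c2. generalize (hchord_half_sq _ _ _ _ c1 c2) (pow2_ge_0 (X1 - X2)) (pow2_ge_0 (Y1 - Y2)).
  lra.
Qed.

Lemma hchord_pos (X1 Y1 X2 Y2 : R) : X1^2 + Y1^2 = 1 -> X2^2 + Y2^2 = 1 ->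
  ~ (X1 = X2 /\ Y1 = Y2) -> 0 < hchord X1 Y1 X2 Y2.
Proof.
  intros c1 c2 hd. generalize (hchord_half_sq _ _ _ _ c1 c2) (pow2_ge_0 (X1 - X2)) (pow2_ge_0 (Y1 - Y2)).
  destruct (Req_dec X1 X2) as [hX | hX].
  - assert (hY : Y1 - Y2 <> 0) by (intro; apply hd; split; lra).
    generalize (pow2_pos _ hY). lra.
  - assert (hX' : X1 - X2 <> 0) by lra.
    generalize (pow2_pos _ hX'). lra.
Qed.

Lemma achord_factor (X1 Y1 X2 Y2 : R) : X1^2 + Y1^2 = 1 -> X2^2 + Y2^2 = 1 ->
  achord be X1 Y1 X2 Y2 =
  hchord X1 Y1 X2 Y2 * (2 * be + (1 - be) * hchord X1 Y1 X2 (- Y2)).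
Proof.
  intros c1 c2. unfold achord, hchord.
  transitivity ((1 - X1 * X2 - Y1 * Y2) * (2 * be + (1 - be) * (1 - X1 * X2 - Y1 * - Y2))
    + ((1 - be) * Y2 ^ 2 + be) * (X1 ^ 2 + Y1 ^ 2 - 1)
    + (1 - (1 - be) * X1 ^ 2) * (X2 ^ 2 + Y2 ^ 2 - 1)); [ring |].
  rewrite c1, c2. ring.
Qed.

End UnitCircleChords.

Section Quartic.
Variables be k : R.

(* Eliminating the ordinates from the linear form of [joach] leaves, for the
   abscissae s, t of the chord endpoints, a biquadratic relation [quartic s t = 0];
   as a quadratic in t its coefficients are [qa s], [qb s], [qc s]. *)
Definition al : R := (1 + k * (1 - be)) ^ 2.
Definition ga : R := -4 * k * (1 - be).
Definition mu : R := -2 * (1 - k * (1 + be)) * (1 - k * (1 - be)).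
Definition nu : R := -4 * k * (1 - k * be).

Definition qa (s : R) : R := al + ga * s ^ 2.
Definition qb (s : R) : R := mu * s.
Definition qc (s : R) : R := al * s ^ 2 + nu.
Definition quartic (s t : R) : R := qa s * t ^ 2 + qb s * t + qc s.

Lemma quartic_square (s t : R) :
  quartic s t = ((1 - k * (1 - be)) * (1 - s * t) - 2 * k * be) ^ 2
                - (1 + k * (1 - be)) ^ 2 * (1 - s ^ 2) * (1 - t ^ 2).
Proof. unfold quartic, qa, qb, qc, al, ga, mu, nu. ring. Qed.

Lemma joach_linear (X1 Y1 X2 Y2 : R) :
  X1^2 + Y1^2 = 1 -> X2^2 + Y2^2 = 1 -> ~ (X1 = X2 /\ Y1 = Y2) ->
  joach be k X1 Y1 X2 Y2 ->
  hchord X1 Y1 X2 Y2 = k * (2 * be + (1 - be) * hchord X1 Y1 X2 (- Y2)).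
Proof.
  intros c1 c2 hd hj. unfold joach in hj.
  rewrite (achord_factor be _ _ _ _ c1 c2) in hj.
  assert (hp := hchord_pos _ _ _ _ c1 c2 hd).
  apply (Rmult_eq_reg_l (hchord X1 Y1 X2 Y2)); [lra | nra].
Qed.

Lemma joach_quartic (X1 Y1 X2 Y2 : R) :
  X1^2 + Y1^2 = 1 -> X2^2 + Y2^2 = 1 -> ~ (X1 = X2 /\ Y1 = Y2) ->
  joach be k X1 Y1 X2 Y2 -> quartic X1 X2 = 0.
Proof.
  intros c1 c2 hd hj.
  assert (hl := joach_linear _ _ _ _ c1 c2 hd hj). unfold hchord in hl.
  assert (hq : (1 + k * (1 - be)) * (Y1 * Y2)
               = (1 - k * (1 - be)) * (1 - X1 * X2) - 2 * k * be) by lra.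
  rewrite quartic_square, <- hq.
  replace (1 - X1 ^ 2) with (Y1 ^ 2) by lra. replace (1 - X2 ^ 2) with (Y2 ^ 2) by lra.
  ring.
Qed.

Definition vieta (s u v : R) : Prop :=
  qa s * (u + v) + qb s = 0 /\ qa s * u * v = qc s.

Lemma vieta_comm (s u v : R) : vieta s u v -> vieta s v u.
Proof. unfold vieta. intros [h1 h2]. split; [rewrite <- h1 | rewrite <- h2]; ring. Qed.

Lemma vieta_of_roots (s u v : R) :
  quartic s u = 0 -> quartic s v = 0 -> u <> v -> vieta s u v.
Proof.
  unfold quartic, vieta. intros hu hv huv.
  assert (hsum : qa s * (u + v) + qb s = 0).
  { apply (mult_cancel_l (u - v)); [lra |].
    transitivity ((qa s * u ^ 2 + qb s * u + qc s) - (qa s * v ^ 2 + qb s * v + qc s)); [ring | lra]. }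
  split; [exact hsum |].
  transitivity (qa s * u * v + (qa s * u ^ 2 + qb s * u + qc s) - u * (qa s * (u + v) + qb s));
    [rewrite hu, hsum; ring | ring].
Qed.

(* At an endpoint s = +-1 of the major axis the quartic in t is a perfect square,
   so the root is double. *)
Lemma vieta_of_pole (s u : R) : s ^ 2 = 1 ->
  (1 - k * (1 - be)) * (1 - s * u) = 2 * k * be -> vieta s u u.
Proof.
  intros hs hu. set (c := 1 - k * (1 - be)) in hu.
  assert (hu' : c * s * u - (c - 2 * k * be) = 0) by lra.
  unfold vieta, qa, qb, qc, al, ga, mu, nu. split.
  - transitivity (2 * (-4 * k * (1 - be)) * u * (s ^ 2 - 1) - 2 * c ^ 2 * u * (s ^ 2 - 1)
                  + 2 * c * s * (c * s * u - (c - 2 * k * be))); [unfold c; ring |].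
    rewrite hs, hu'. ring.
  - apply Rminus_diag_uniq.
    transitivity (((-4 * k * (1 - be)) * u ^ 2 - c ^ 2 * u ^ 2 - (1 + k * (1 - be)) ^ 2) * (s ^ 2 - 1)
                  + (c * s * u - (c - 2 * k * be)) * (c * s * u + (c - 2 * k * be)));
      [unfold c; ring |].
    rewrite hs, hu'. ring.
Qed.

(* At every vertex A of a triangle inscribed in the unit circle whose sides from A
   satisfy [joach], the abscissae of the other two vertices are the roots of
   [quartic XA _]; when they coincide, A is forced to be a pole of the circle. *)
Lemma vieta_at_vertex (XA YA XB YB XC YC : R) : 0 < be < 1 -> 0 < k ->
  XA^2 + YA^2 = 1 -> XB^2 + YB^2 = 1 -> XC^2 + YC^2 = 1 ->
  ~ (XA = XB /\ YA = YB) -> ~ (XA = XC /\ YA = YC) -> ~ (XB = XC /\ YB = YC) ->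
  joach be k XA YA XB YB -> joach be k XA YA XC YC -> vieta XA XB XC.
Proof.
  intros hbe hk cA cB cC dAB dAC dBC jAB jAC.
  destruct (Req_dec XB XC) as [hBC | hBC].
  2: { apply vieta_of_roots; [eapply joach_quartic; eauto .. | exact hBC]. }
  subst XC.
  assert (hYC : YC + YB = 0).
  { apply (mult_cancel_l (YC - YB)); [intro; apply dBC; split; lra | nra]. }
  replace YC with (- YB) in * by lra. clear hYC.
  assert (hYB : YB <> 0) by (intro; apply dBC; split; lra).
  assert (lB := joach_linear _ _ _ _ cA cB dAB jAB).
  assert (lC := joach_linear _ _ _ _ cA cC dAC jAC).
  rewrite Ropp_involutive in lC.
  assert (hsame : hchord XA YA XB YB = hchord XA YA XB (- YB)).
  { apply Rminus_diag_uniq, (mult_cancel_l (1 + k * (1 - be))); [nra | nra]. }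
  unfold hchord in hsame, lB.
  assert (hYA : YA = 0) by (apply (mult_cancel_l YB); [exact hYB | lra]).
  subst YA.
  apply vieta_of_pole; [lra | nra].
Qed.

End Quartic.

Section Closure.
Variables be k : R.

(* Closure conditions of the triangle: the elementary symmetric functions of the
   three abscissae are tied to the coefficients, and the coefficients satisfy a
   Cayley-type condition that no longer involves the triangle. *)
Definition closes (X1 X2 X3 : R) : Prop :=
  ga be k * (X1 * X2 + X1 * X3 + X2 * X3) = al be k - mu be k /\
  ga be k * (X1 * X2 * X3) = al be k * (X1 + X2 + X3) /\
  al be k * (al be k - mu be k) = ga be k * nu be k.

Lemma closes_swap23 (X1 X2 X3 : R) : closes X1 X3 X2 -> closes X1 X2 X3.
Proof.
  unfold closes. intros [h1 [h2 h3]]. split; [| split; [| exact h3]].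
  - rewrite <- h1. ring.
  - replace (X1 * X2 * X3) with (X1 * X3 * X2) by ring. rewrite h2. ring.
Qed.

Lemma closes_of_vieta (X1 X2 X3 : R) :
  vieta be k X1 X2 X3 -> vieta be k X2 X1 X3 -> X1 <> X2 -> closes X1 X2 X3.
Proof.
  unfold closes, vieta, qa, qb, qc. intros [S1 P1] [S2 P2] h12.
  set (A := al be k) in *. set (G := ga be k) in *. set (M := mu be k) in *. set (N := nu be k) in *.
  assert (h12' : X1 - X2 <> 0) by lra.
  assert (I : G * (X1 * X2 + X1 * X3 + X2 * X3) - (A - M) = 0).
  { apply (mult_cancel_l _ _ h12').
    transitivity (((A + G * X1 ^ 2) * (X2 + X3) + M * X1) - ((A + G * X2 ^ 2) * (X1 + X3) + M * X2));
      [ring | rewrite S1, S2; ring]. }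
  assert (III : G * (X1 * X2 * X3) - A * (X1 + X2 + X3) = 0).
  { apply (mult_cancel_l _ _ h12').
    transitivity (((A + G * X1 ^ 2) * X2 * X3 - (A * X1 ^ 2 + N))
                  - ((A + G * X2 ^ 2) * X1 * X3 - (A * X2 ^ 2 + N))); [ring | rewrite P1, P2; ring]. }
  assert (C : A * (A - M) - G * N = 0).
  { transitivity (- (A + G * X1 ^ 2) * (G * (X1 * X2 + X1 * X3 + X2 * X3) - (A - M))
                  + G * (X1 * ((A + G * X1 ^ 2) * (X2 + X3) + M * X1)
                         + ((A + G * X1 ^ 2) * X2 * X3 - (A * X1 ^ 2 + N)))); [ring |].
    rewrite I, S1, P1. ring. }
  split; [| split]; lra.
Qed.

Lemma joach_large_k (X1 Y1 X2 Y2 : R) : 0 < be < 1 -> 1 <= k ->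
  X1^2 + Y1^2 = 1 -> X2^2 + Y2^2 = 1 -> ~ (X1 = X2 /\ Y1 = Y2) ->
  joach be k X1 Y1 X2 Y2 ->
  Y1 * Y2 <= 0 /\ (Y1 * Y2 = 0 -> Y1 = 0 /\ Y2 = 0 /\ X1 = - X2).
Proof.
  intros hbe hk c1 c2 hd hj.
  assert (hl := joach_linear be k _ _ _ _ c1 c2 hd hj).
  assert (hm := hchord_nonneg _ _ _ _ c1 (ltac:(lra) : X2^2 + (- Y2)^2 = 1)).
  unfold hchord in hl, hm.
  assert (hanti : 2 * (1 + X1 * X2 - Y1 * Y2) = (X1 + X2) ^ 2 + (Y1 - Y2) ^ 2) by nra.
  generalize (pow2_ge_0 (X1 + X2)) (pow2_ge_0 (Y1 - Y2)); intros q1 q2.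
  set (B := 2 * be + (1 - be) * (1 - X1 * X2 - Y1 * - Y2)) in hl.
  assert (hB : 0 <= (k - 1) * B) by (apply Rmult_le_pos; unfold B; nra).
  assert (hY : 2 * Y1 * Y2 + be * (1 + X1 * X2 - Y1 * Y2) <= 0) by (unfold B in hl, hB; nra).
  assert (hA : 0 <= be * (1 + X1 * X2 - Y1 * Y2)) by (apply Rmult_le_pos; lra).
  split; [lra |]. intro h0.
  assert (hA0 : 1 + X1 * X2 - Y1 * Y2 = 0) by (apply (mult_cancel_l be); lra).
  assert (hX : X1 + X2 = 0) by nra. assert (hY' : Y1 - Y2 = 0) by nra.
  assert (Y1 = 0) by nra. repeat split; lra.
Qed.

Lemma k_lt_1 (X1 Y1 X2 Y2 X3 Y3 : R) : 0 < be < 1 ->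
  X1^2 + Y1^2 = 1 -> X2^2 + Y2^2 = 1 -> X3^2 + Y3^2 = 1 ->
  ~ (X1 = X2 /\ Y1 = Y2) -> ~ (X1 = X3 /\ Y1 = Y3) -> ~ (X2 = X3 /\ Y2 = Y3) ->
  joach be k X1 Y1 X2 Y2 -> joach be k X1 Y1 X3 Y3 -> joach be k X2 Y2 X3 Y3 -> k < 1.
Proof.
  intros hbe c1 c2 c3 d12 d13 d23 j12 j13 j23.
  destruct (Rlt_or_le k 1) as [hk | hk]; [exact hk | exfalso].
  destruct (joach_large_k _ _ _ _ hbe hk c1 c2 d12 j12) as [g12 z12].
  destruct (joach_large_k _ _ _ _ hbe hk c1 c3 d13 j13) as [g13 z13].
  destruct (joach_large_k _ _ _ _ hbe hk c2 c3 d23 j23) as [g23 z23].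
  destruct (Req_dec (Y1 * Y2) 0) as [e12 | e12].
  { destruct (z12 e12) as [h1 [h2 h3]].
    destruct (z13 ltac:(rewrite h1; ring)) as [_ [h4 h5]].
    destruct (z23 ltac:(rewrite h2; ring)) as [_ [_ h6]].
    nra. }
  assert (hprod : 0 <= (Y1 * Y2 * Y3) ^ 2) by apply pow2_ge_0.
  destruct (Req_dec (Y1 * Y3) 0) as [e13 | e13].
  { destruct (z13 e13) as [h1 _]. apply e12. rewrite h1. ring. }
  destruct (Req_dec (Y2 * Y3) 0) as [e23 | e23].
  { destruct (z23 e23) as [h1 _]. apply e12. rewrite h1. ring. }
  assert (l12 : Y1 * Y2 < 0) by lra. assert (l13 : Y1 * Y3 < 0) by lra.
  assert (l23 : Y2 * Y3 < 0) by lra.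
  assert (0 < (Y1 * Y2) * (Y1 * Y3)) by nra.
  nra.
Qed.

Lemma not_all_same_abscissa (X1 Y1 X2 Y2 X3 Y3 : R) :
  X1^2 + Y1^2 = 1 -> X2^2 + Y2^2 = 1 -> X3^2 + Y3^2 = 1 ->
  ~ (X1 = X2 /\ Y1 = Y2) -> ~ (X1 = X3 /\ Y1 = Y3) -> ~ (X2 = X3 /\ Y2 = Y3) ->
  X1 = X2 -> X1 <> X3.
Proof.
  intros c1 c2 c3 d12 d13 d23 h12 h13. subst X2 X3.
  assert (e2 : (Y2 - Y1) * (Y2 + Y1) = 0) by nra.
  assert (e3 : (Y3 - Y1) * (Y3 + Y1) = 0) by nra.
  assert (Y2 + Y1 = 0) by (apply (mult_cancel_l (Y2 - Y1)); [intro; apply d12; split; lra | exact e2]).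
  assert (Y3 + Y1 = 0) by (apply (mult_cancel_l (Y3 - Y1)); [intro; apply d13; split; lra | exact e3]).
  apply d23. split; lra.
Qed.

Lemma closes_of_triangle (X1 Y1 X2 Y2 X3 Y3 : R) : 0 < be < 1 -> 0 < k ->
  X1^2 + Y1^2 = 1 -> X2^2 + Y2^2 = 1 -> X3^2 + Y3^2 = 1 ->
  ~ (X1 = X2 /\ Y1 = Y2) -> ~ (X1 = X3 /\ Y1 = Y3) -> ~ (X2 = X3 /\ Y2 = Y3) ->
  joach be k X1 Y1 X2 Y2 -> joach be k X1 Y1 X3 Y3 -> joach be k X2 Y2 X3 Y3 ->
  closes X1 X2 X3.
Proof.
  intros hbe hk c1 c2 c3 d12 d13 d23 j12 j13 j23.
  assert (flip : forall x1 y1 x2 y2 : R, ~ (x1 = x2 /\ y1 = y2) -> ~ (x2 = x1 /\ y2 = y1))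
    by (intros ? ? ? ? h [? ?]; apply h; split; congruence).
  assert (v1 : vieta be k X1 X2 X3) by (apply (vieta_at_vertex be k X1 Y1 X2 Y2 X3 Y3); auto).
  assert (v2 : vieta be k X2 X1 X3)
    by (apply (vieta_at_vertex be k X2 Y2 X1 Y1 X3 Y3); auto using joach_sym).
  assert (v3 : vieta be k X3 X1 X2)
    by (apply (vieta_at_vertex be k X3 Y3 X1 Y1 X2 Y2); auto using joach_sym).
  destruct (Req_dec X1 X2) as [h12 | h12].
  - apply closes_swap23, closes_of_vieta; [apply vieta_comm; exact v1 | exact v3 |].
    exact (not_all_same_abscissa _ _ _ _ _ _ c1 c2 c3 d12 d13 d23 h12).
  - apply closes_of_vieta; assumption.
Qed.

End Closure.

Section Caustic.
Variables be k : R.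

(* The Cayley condition factors; only the first factor can vanish for 0 < k < 1,
   and it pins k down in terms of be alone. *)
Definition caustic_poly : R := (1 - be) ^ 2 * k ^ 2 + 2 * (1 + be) * k - 3.
Definition spurious_poly : R := (1 - be) * (be + 3) * k ^ 2 - 2 * (1 - be) * k - 1.

Lemma cayley_factor :
  al be k * (al be k - mu be k) - ga be k * nu be k = caustic_poly * spurious_poly.
Proof. unfold al, mu, ga, nu, caustic_poly, spurious_poly. ring. Qed.

Lemma spurious_poly_neg : 0 < be < 1 -> 0 < k < 1 -> spurious_poly < 0.
Proof.
  intros hbe hk. unfold spurious_poly.
  assert (hkk : k ^ 2 < k) by nra.
  assert ((1 - be) * (be + 3) * k ^ 2 <= (1 - be) * (be + 3) * k)
    by (apply Rmult_le_compat_l; nra).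
  assert ((1 - be) * (be + 1) * k < (1 - be) * (be + 1) * 1)
    by (apply Rmult_lt_compat_l; [apply Rmult_lt_0_compat |]; lra).
  nra.
Qed.

Lemma caustic_root (X1 X2 X3 : R) : 0 < be < 1 -> 0 < k < 1 ->
  closes be k X1 X2 X3 -> caustic_poly = 0.
Proof.
  intros hbe hk [_ [_ hC]].
  apply (Rmult_eq_reg_r spurious_poly); [| generalize (spurious_poly_neg hbe hk); lra].
  rewrite Rmult_0_l, <- cayley_factor, hC. ring.
Qed.

(* With delta^2 = 1 - be + be^2 (delta normalised by a^2), the admissible root k
   is read off from delta. *)
Lemma caustic_delta (dh : R) : 0 < be < 1 -> 0 < k ->
  dh ^ 2 = 1 - be + be ^ 2 -> 0 <= dh -> caustic_poly = 0 ->
  2 * dh = (1 - be) ^ 2 * k + 1 + be.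
Proof.
  intros hbe hk hdh hdh0 hq.
  assert (hsq : ((1 - be) ^ 2 * k + 1 + be) ^ 2 = (2 * dh) ^ 2)
    by (transitivity (4 * dh ^ 2 + (1 - be) ^ 2 * caustic_poly);
        [rewrite hdh; unfold caustic_poly; ring | rewrite hq; ring]).
  assert (hpos : 0 <= (1 - be) ^ 2 * k) by (apply Rmult_le_pos; [apply pow2_ge_0 | lra]).
  symmetry. apply Rsqr_inj; [lra | lra |].
  rewrite !Rsqr_pow2. exact hsq.
Qed.

Section OnTheCaustic.
Variable dh : R.
Hypothesis hq : caustic_poly = 0.
Hypothesis hdh : 2 * dh = (1 - be) ^ 2 * k + 1 + be.

Lemma focal_ratio : (1 + be + dh) * (1 - k * (1 + be)) = - 2 * be * k.
Proof.
  apply (Rmult_eq_reg_l 2); [| lra].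
  transitivity ((2 * dh - ((1 - be) ^ 2 * k + 1 + be)) * (1 - k * (1 + be))
                - (1 + be) * caustic_poly - 4 * be * k); [unfold caustic_poly; ring |].
  rewrite hdh, hq. ring.
Qed.

(* Coefficient of e1 = X1 + X2 + X3 in the sum of reciprocals. *)
Lemma coeff_e1 : 2 * be * ga be k = (1 + be + dh) * (ga be k + (1 - be) * al be k).
Proof.
  apply Rminus_diag_uniq.
  transitivity (- 4 * (1 - be) * ((1 + be + dh) * (1 - k * (1 + be)) + 2 * be * k)
                - (1 - be) * (1 + be + dh) * caustic_poly); [unfold ga, al, caustic_poly; ring |].
  rewrite focal_ratio, hq. ring.
Qed.

(* Constant coefficient, given the second symmetric function e2 of the abscissae. *)
Lemma coeff_const (e2 : R) : 0 < be < 1 -> 0 < k ->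
  al be k * e2 = nu be k ->
  be * (3 + (1 - be) * e2) = (1 + be + dh) * (1 + (1 - be) * e2).
Proof.
  intros hbe hk he2.
  set (S := 1 + be + dh). set (K := 1 - k * (1 + be)).
  assert (hSK : S * K = - 2 * be * k) by exact focal_ratio.
  assert (hK : K <> 0) by (intro h0; rewrite h0 in hSK; nra).
  assert (hal : al be k <> 0)
    by (unfold al; apply pow_nonzero; assert (0 <= k * (1 - be)) by (apply Rmult_le_pos; lra); lra).
  apply Rminus_diag_uniq, (mult_cancel_l (al be k * K)); [apply Rmult_integral_contrapositive; tauto |].
  transitivity (be * ((3 * al be k + (1 - be) * nu be k) * K + 2 * k * (al be k + (1 - be) * nu be k))
                + (1 - be) * (be * K - S * K) * (al be k * e2 - nu be k)
                - (al be k + (1 - be) * nu be k) * (S * K + 2 * be * k)); [ring |].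
  replace ((3 * al be k + (1 - be) * nu be k) * K + 2 * k * (al be k + (1 - be) * nu be k))
    with (- (1 + k * (1 - be)) * caustic_poly) by (unfold K, al, nu, caustic_poly; ring).
  rewrite hq, he2, hSK. ring.
Qed.

End OnTheCaustic.

Lemma reciprocal_sum (e dh X1 X2 X3 : R) : 0 < be < 1 -> 0 < k < 1 ->
  e ^ 2 = 1 - be -> 0 <= e -> dh ^ 2 = 1 - be + be ^ 2 -> 0 <= dh ->
  -1 <= X1 <= 1 -> -1 <= X2 <= 1 -> -1 <= X3 <= 1 ->
  closes be k X1 X2 X3 ->
  1 / (1 + e * X1) + 1 / (1 + e * X2) + 1 / (1 + e * X3) = (1 + be + dh) / be.
Proof.
  intros hbe hk he he0 hdh hdh0 h1 h2 h3 hcl.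
  assert (hq := caustic_root X1 X2 X3 hbe hk hcl).
  assert (hd := caustic_delta dh hbe (proj1 hk) hdh hdh0 hq).
  destruct hcl as [I [III C]].
  assert (e1 : e < 1) by nra.
  assert (p1 : 0 < 1 + e * X1) by nra. assert (p2 : 0 < 1 + e * X2) by nra.
  assert (p3 : 0 < 1 + e * X3) by nra.
  assert (hga : ga be k <> 0) by (unfold ga; nra).
  set (s1 := X1 + X2 + X3) in *. set (s2 := X1 * X2 + X1 * X3 + X2 * X3) in *.
  set (s3 := X1 * X2 * X3) in *.
  assert (II : al be k * s2 = nu be k).
  { apply Rminus_diag_uniq, (mult_cancel_l _ _ hga).
    transitivity (al be k * (ga be k * s2) - ga be k * nu be k); [ring | rewrite I, C; ring]. }
  assert (T1 := coeff_e1 dh hq hd). assert (T2 := coeff_const dh hq hd s2 hbe (proj1 hk) II).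
  set (S := 1 + be + dh) in *.
  assert (key : be * (3 + 2 * e * s1 + (1 - be) * s2)
                = S * (1 + e * s1 + (1 - be) * s2 + e * (1 - be) * s3)).
  { apply Rminus_diag_uniq, (mult_cancel_l _ _ hga).
    transitivity (ga be k * (be * (3 + (1 - be) * s2) - S * (1 + (1 - be) * s2))
                  + e * s1 * (2 * be * ga be k - S * (ga be k + (1 - be) * al be k))
                  + S * e * (1 - be) * (al be k * s1 - ga be k * s3)); [ring |].
    rewrite T2, T1, III. ring. }
  replace (1 - be) with (e ^ 2) in key by exact he.
  apply (Rmult_eq_reg_r (be * ((1 + e * X1) * (1 + e * X2) * (1 + e * X3)))).
  - unfold s1, s2, s3 in key. field_simplify; [lra | lra | repeat split; lra].
  - apply Rmult_integral_contrapositive. split; [lra |]. apply Rgt_not_eq.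
    repeat apply Rmult_gt_0_compat; lra.
Qed.

End Caustic.

Lemma norm_sq (p : pt) : norm p ^ 2 = dot p p.
Proof.
  unfold norm. apply pow2_sqrt. unfold dot.
  generalize (pow2_ge_0 (fst p)) (pow2_ge_0 (snd p)). nra.
Qed.

Lemma norm_pos (x y : R) : ~ (x = 0 /\ y = 0) -> 0 < norm (x, y).
Proof.
  intro h. unfold norm, dot. apply sqrt_lt_R0. cbn [fst snd].
  destruct (Req_dec x 0) as [hx | hx].
  - assert (hy : y <> 0) by (intro; apply h; auto). generalize (pow2_pos _ hy). nra.
  - generalize (pow2_pos _ hx) (pow2_ge_0 y). nra.
Qed.

Lemma pdist_pos (x1 y1 x2 y2 : R) : ~ (x1 = x2 /\ y1 = y2) -> 0 < pdist (x1, y1) (x2, y2).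
Proof. intro h. apply norm_pos. cbn [fst snd]. intros [h1 h2]. apply h. split; lra. Qed.

Lemma pdist_sym (p q : pt) : pdist p q = pdist q p.
Proof. unfold pdist, norm, dot, psub. cbn [fst snd]. f_equal. ring. Qed.

Lemma ellipse_to_circle (a b x y : R) : 0 < a -> 0 < b ->
  on_ellipse a b (x, y) -> (x / a) ^ 2 + (y / b) ^ 2 = 1.
Proof. unfold on_ellipse. cbn [fst snd]. intros ha hb h. rewrite <- h. field. lra. Qed.

Lemma normalize_distinct (a b x1 y1 x2 y2 : R) : 0 < a -> 0 < b ->
  (x1, y1) <> (x2, y2) -> ~ (x1 / a = x2 / a /\ y1 / b = y2 / b).
Proof.
  intros ha hb h [hx hy]. apply h. f_equal.
  - apply (Rmult_eq_reg_r (/ a)); [exact hx | apply Rinv_neq_0_compat; lra].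
  - apply (Rmult_eq_reg_r (/ b)); [exact hy | apply Rinv_neq_0_compat; lra].
Qed.

Lemma pdist_sq_normalized (a b x1 y1 x2 y2 : R) : 0 < a -> 0 < b ->
  pdist (x2, y2) (x1, y1) ^ 2 = a ^ 2 * achord (b ^ 2 / a ^ 2) (x1 / a) (y1 / b) (x2 / a) (y2 / b).
Proof. intros ha hb. unfold pdist. rewrite norm_sq. unfold dot, psub, achord. cbn [fst snd]. field. lra. Qed.

Lemma normal_dot_side (a b x1 y1 x y : R) : 0 < a -> 0 < b -> on_ellipse a b (x1, y1) ->
  dot (ell_normal a b (x1, y1)) (psub (x, y) (x1, y1)) = - hchord (x1 / a) (y1 / b) (x / a) (y / b).
Proof.
  unfold on_ellipse. cbn [fst snd]. intros ha hb h.
  unfold dot, ell_normal, psub, hchord. cbn [fst snd].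
  transitivity (x1 / a ^ 2 * x + y1 / b ^ 2 * y - (x1 ^ 2 / a ^ 2 + y1 ^ 2 / b ^ 2)); [field; lra |].
  rewrite h. field. lra.
Qed.

Lemma bisector_ratio (a b x1 y1 x2 y2 x3 y3 : R) : 0 < a -> 0 < b ->
  on_ellipse a b (x1, y1) -> (x1, y1) <> (x2, y2) -> (x1, y1) <> (x3, y3) ->
  normal_bisects a b (x1, y1) (x2, y2) (x3, y3) ->
  hchord (x1 / a) (y1 / b) (x2 / a) (y2 / b) / pdist (x2, y2) (x1, y1) =
  hchord (x1 / a) (y1 / b) (x3 / a) (y3 / b) / pdist (x3, y3) (x1, y1).
Proof.
  intros ha hb h1 d12 d13 hbis.
  unfold normal_bisects, cos_angle in hbis.
  rewrite !normal_dot_side in hbis by assumption.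
  assert (hN : 0 < norm (ell_normal a b (x1, y1))).
  { apply norm_pos. unfold on_ellipse in h1. cbn [fst snd] in h1 |- *. intros [hx hy].
    assert (hx1 : x1 = 0) by (apply (Rmult_eq_reg_r (/ a ^ 2)); [lra | apply Rinv_neq_0_compat; nra]).
    assert (hy1 : y1 = 0) by (apply (Rmult_eq_reg_r (/ b ^ 2)); [lra | apply Rinv_neq_0_compat; nra]).
    rewrite hx1, hy1 in h1. replace (0 ^ 2 / a ^ 2 + 0 ^ 2 / b ^ 2) with 0 in h1 by (field; lra). lra. }
  assert (h2 : 0 < pdist (x2, y2) (x1, y1))
    by (apply pdist_pos; intros [? ?]; apply d12; f_equal; auto).
  assert (h3 : 0 < pdist (x3, y3) (x1, y1))
    by (apply pdist_pos; intros [? ?]; apply d13; f_equal; auto).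
  unfold pdist in *. set (N := norm (ell_normal a b (x1, y1))) in *.
  transitivity (- N * (- hchord (x1 / a) (y1 / b) (x2 / a) (y2 / b) / (N * norm (psub (x2, y2) (x1, y1)))));
    [field; lra |].
  rewrite hbis. field. lra.
Qed.

Lemma joach_of_ratio (a b r x1 y1 x2 y2 : R) : 0 < a -> 0 < b ->
  hchord (x1 / a) (y1 / b) (x2 / a) (y2 / b) = r * pdist (x2, y2) (x1, y1) ->
  joach (b ^ 2 / a ^ 2) (r ^ 2 * a ^ 2) (x1 / a) (y1 / b) (x2 / a) (y2 / b).
Proof.
  intros ha hb h. unfold joach. rewrite h, Rpow_mult_distr, (pdist_sq_normalized a b) by assumption.
  ring.
Qed.

(* The bisector conditions at two vertices make the ratio half chord / side length
   common to the three sides; hence the three sides satisfy [joach] with one k. *)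
Lemma periodic_joach (a b x1 y1 x2 y2 x3 y3 : R) : 0 < a -> 0 < b ->
  three_periodic a b (x1, y1) (x2, y2) (x3, y3) ->
  exists k, 0 < k /\
    joach (b ^ 2 / a ^ 2) k (x1 / a) (y1 / b) (x2 / a) (y2 / b) /\
    joach (b ^ 2 / a ^ 2) k (x1 / a) (y1 / b) (x3 / a) (y3 / b) /\
    joach (b ^ 2 / a ^ 2) k (x2 / a) (y2 / b) (x3 / a) (y3 / b).
Proof.
  intros ha hb (e1 & e2 & e3 & n12 & n23 & n13 & b1 & b2 & _).
  assert (n21 : (x2, y2) <> (x1, y1)) by (intro h; apply n12; auto).
  assert (L12 : 0 < pdist (x2, y2) (x1, y1))
    by (apply pdist_pos; intros [? ?]; apply n21; f_equal; auto).
  assert (L13 : 0 < pdist (x3, y3) (x1, y1))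
    by (apply pdist_pos; intros [? ?]; apply n13; f_equal; auto).
  assert (L23 : 0 < pdist (x3, y3) (x2, y2))
    by (apply pdist_pos; intros [? ?]; apply n23; f_equal; auto).
  set (r := hchord (x1 / a) (y1 / b) (x2 / a) (y2 / b) / pdist (x2, y2) (x1, y1)).
  assert (hr : 0 < r).
  { apply Rdiv_lt_0_compat; [| exact L12].
    apply hchord_pos; [apply ellipse_to_circle; auto .. | apply normalize_distinct; auto]. }
  assert (r12 : hchord (x1 / a) (y1 / b) (x2 / a) (y2 / b) = r * pdist (x2, y2) (x1, y1))
    by (unfold r; field; lra).
  assert (r13 : hchord (x1 / a) (y1 / b) (x3 / a) (y3 / b) = r * pdist (x3, y3) (x1, y1)).
  { unfold r. rewrite (bisector_ratio a b x1 y1 x2 y2 x3 y3) by assumption. field. lra. }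
  assert (r23 : hchord (x2 / a) (y2 / b) (x3 / a) (y3 / b) = r * pdist (x3, y3) (x2, y2)).
  { unfold r. rewrite (hchord_sym (x1 / a) (y1 / b)), (pdist_sym (x2, y2) (x1, y1)).
    rewrite <- (bisector_ratio a b x2 y2 x3 y3 x1 y1) by auto. field. lra. }
  exists (r ^ 2 * a ^ 2). split; [apply Rmult_lt_0_compat; apply pow_lt; lra |].
  split; [| split]; apply joach_of_ratio; assumption.
Qed.

Lemma foc_c_sq (a b : R) : 0 < b < a -> foc_c a b ^ 2 = a ^ 2 - b ^ 2 /\ 0 <= foc_c a b.
Proof. intro h. unfold foc_c. split; [apply pow2_sqrt; nra | apply sqrt_pos]. Qed.

Lemma delta_sq (a b : R) : delta a b ^ 2 = a ^ 4 - a ^ 2 * b ^ 2 + b ^ 4 /\ 0 <= delta a b.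
Proof.
  unfold delta. split; [| apply sqrt_pos]. apply pow2_sqrt.
  generalize (pow2_ge_0 (a ^ 2 - b ^ 2)) (pow2_ge_0 (a * b)). nra.
Qed.

Lemma focal_distance (a b x y : R) : 0 < b < a -> on_ellipse a b (x, y) ->
  pdist (x, y) (f1 a b) = a * (1 + foc_c a b / a * (x / a)) /\ 0 < 1 + foc_c a b / a * (x / a).
Proof.
  intros h hxy. destruct (foc_c_sq a b h) as [hc hc0].
  assert (hcirc := ellipse_to_circle a b x y ltac:(lra) ltac:(lra) hxy).
  unfold on_ellipse in hxy. cbn [fst snd] in hxy.
  set (c := foc_c a b) in *.
  assert (hX : -1 <= x / a <= 1) by nra.
  assert (he : 0 <= c / a < 1).
  { split; [apply Rmult_le_pos; [lra | left; apply Rinv_0_lt_compat; lra] |].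
    apply (Rmult_lt_reg_r a); [lra |]. field_simplify; nra. }
  assert (hpos : 0 < 1 + c / a * (x / a)) by nra.
  split; [| exact hpos].
  unfold pdist, norm, dot, psub, f1. cbn [fst snd]. fold c.
  rewrite <- (sqrt_pow2 (a * (1 + c / a * (x / a)))) by nra. f_equal.
  replace ((y - 0) * (y - 0)) with (b ^ 2 * (1 - x ^ 2 / a ^ 2)) by (rewrite <- hxy; field; lra).
  transitivity ((a * (1 + c / a * (x / a))) ^ 2 + (c ^ 2 - (a ^ 2 - b ^ 2)) * (1 - x ^ 2 / a ^ 2));
    [field; lra | rewrite hc; ring].
Qed.

Lemma eccentricity_sq (a b : R) : 0 < b < a ->
  (foc_c a b / a) ^ 2 = 1 - b ^ 2 / a ^ 2 /\ 0 <= foc_c a b / a.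
Proof.
  intro h. destruct (foc_c_sq a b h) as [hc hc0]. split.
  - unfold Rdiv. rewrite Rpow_mult_distr, hc, pow_inv. field. lra.
  - apply Rmult_le_pos; [lra | left; apply Rinv_0_lt_compat; lra].
Qed.

Lemma delta_normalized_sq (a b : R) : 0 < b < a ->
  (delta a b / a ^ 2) ^ 2 = 1 - b ^ 2 / a ^ 2 + (b ^ 2 / a ^ 2) ^ 2 /\ 0 <= delta a b / a ^ 2.
Proof.
  intro h. destruct (delta_sq a b) as [hd hd0]. split.
  - unfold Rdiv. rewrite !Rpow_mult_distr, hd, !pow_inv. field. lra.
  - apply Rmult_le_pos; [lra | left; apply Rinv_0_lt_compat; nra].
Qed.

Lemma periodic_reciprocal_sum (a b x1 y1 x2 y2 x3 y3 : R) : 0 < b < a ->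
  three_periodic a b (x1, y1) (x2, y2) (x3, y3) ->
  let e := foc_c a b / a in
  1 / (1 + e * (x1 / a)) + 1 / (1 + e * (x2 / a)) + 1 / (1 + e * (x3 / a))
  = (1 + b ^ 2 / a ^ 2 + delta a b / a ^ 2) / (b ^ 2 / a ^ 2).
Proof.
  intros h hP e. assert (ha : 0 < a) by lra. assert (hb : 0 < b) by lra.
  destruct (periodic_joach a b x1 y1 x2 y2 x3 y3 ha (proj1 h) hP) as (k & hk & j12 & j13 & j23).
  destruct hP as (e1 & e2 & e3 & n12 & n23 & n13 & _).
  assert (c1 := ellipse_to_circle a b x1 y1 ha hb e1).
  assert (c2 := ellipse_to_circle a b x2 y2 ha hb e2).
  assert (c3 := ellipse_to_circle a b x3 y3 ha hb e3).
  assert (d12 := normalize_distinct a b x1 y1 x2 y2 ha hb n12).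
  assert (d13 := normalize_distinct a b x1 y1 x3 y3 ha hb n13).
  assert (d23 := normalize_distinct a b x2 y2 x3 y3 ha hb n23).
  assert (hbe : 0 < b ^ 2 / a ^ 2 < 1).
  { split; [apply Rdiv_lt_0_compat; nra |].
    apply (Rmult_lt_reg_r (a ^ 2)); [nra | field_simplify; nra]. }
  assert (hk1 := k_lt_1 _ k _ _ _ _ _ _ hbe c1 c2 c3 d12 d13 d23 j12 j13 j23).
  assert (hcl := closes_of_triangle _ k _ _ _ _ _ _ hbe hk c1 c2 c3 d12 d13 d23 j12 j13 j23).
  destruct (eccentricity_sq a b h) as [he he0].
  destruct (delta_normalized_sq a b h) as [hdh hdh0].
  apply (reciprocal_sum _ k); try assumption; try split; try nra.
Qed.

Lemma focal_distance_pos (a b : R) (P : pt) : 0 < b < a -> on_ellipse a b P ->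
  0 < pdist P (f1 a b).
Proof.
  intros h hP. destruct P as [x y].
  destruct (focal_distance a b x y h hP) as [hd hpos].
  rewrite hd. apply Rmult_lt_0_compat; lra.
Qed.

Lemma periodic_inverse_focal_sum (a b : R) (P1 P2 P3 : pt) : 0 < b < a ->
  three_periodic a b P1 P2 P3 ->
  1 / pdist P1 (f1 a b) + 1 / pdist P2 (f1 a b) + 1 / pdist P3 (f1 a b)
  = (a ^ 2 + b ^ 2 + delta a b) / (a * b ^ 2).
Proof.
  intros h hP. destruct P1 as [x1 y1], P2 as [x2 y2], P3 as [x3 y3].
  assert (hsum := periodic_reciprocal_sum a b x1 y1 x2 y2 x3 y3 h hP). cbv zeta in hsum.
  destruct hP as (e1 & e2 & e3 & _).
  destruct (focal_distance a b x1 y1 h e1) as [-> p1].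
  destruct (focal_distance a b x2 y2 h e2) as [-> p2].
  destruct (focal_distance a b x3 y3 h e3) as [-> p3].
  set (e := foc_c a b / a) in *.
  transitivity ((1 / (1 + e * (x1 / a)) + 1 / (1 + e * (x2 / a)) + 1 / (1 + e * (x3 / a))) / a).
  - unfold Rdiv. rewrite !Rinv_mult. ring.
  - rewrite hsum. field. lra.
Qed.

Lemma focus_inv_dist (a b rho : R) (P : pt) : 0 < pdist P (f1 a b) ->
  pdist (focus_inv a b rho P) (f1 a b) = rho ^ 2 / pdist P (f1 a b).
Proof.
  intro hd. assert (hsq := norm_sq (psub P (f1 a b))). fold (pdist P (f1 a b)) in hsq.
  set (d := pdist P (f1 a b)) in *.
  unfold focus_inv. cbv zeta. fold d. set (t := (rho / d) ^ 2).
  replace (rho ^ 2 / d) with (t * d) by (unfold t; field; lra).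
  assert (ht : 0 <= t) by apply pow2_ge_0.
  unfold pdist at 1, norm. rewrite <- (sqrt_pow2 (t * d)) by (apply Rmult_le_pos; lra).
  f_equal. rewrite Rpow_mult_distr, hsq. unfold dot, psub. cbn [fst snd]. ring.
Qed.

Theorem mainTheorem6 (a b rho : R) (P1 P2 P3 : pt) :
  a > b -> b > 0 -> rho > 0 ->
  three_periodic a b P1 P2 P3 ->
  1 / pdist P1 (f1 a b) + 1 / pdist P2 (f1 a b) + 1 / pdist P3 (f1 a b)
    = (a^2 + b^2 + delta a b) / (a * b^2)
  /\
  pdist (focus_inv a b rho P1) (f1 a b) + pdist (focus_inv a b rho P2) (f1 a b)
    + pdist (focus_inv a b rho P3) (f1 a b)
    = rho^2 * (1 / pdist P1 (f1 a b) + 1 / pdist P2 (f1 a b) + 1 / pdist P3 (f1 a b))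
  /\
  pdist (focus_inv a b rho P1) (f1 a b) + pdist (focus_inv a b rho P2) (f1 a b)
    + pdist (focus_inv a b rho P3) (f1 a b)
    = rho^2 * (a^2 + b^2 + delta a b) / (a * b^2).
Proof.
  intros hab hb hrho hP. assert (h : 0 < b < a) by lra.
  assert (hS := periodic_inverse_focal_sum a b P1 P2 P3 h hP).
  destruct hP as (e1 & e2 & e3 & _).
  assert (d1 := focal_distance_pos a b P1 h e1).
  assert (d2 := focal_distance_pos a b P2 h e2).
  assert (d3 := focal_distance_pos a b P3 h e3).
  assert (hinv : pdist (focus_inv a b rho P1) (f1 a b) + pdist (focus_inv a b rho P2) (f1 a b)
                 + pdist (focus_inv a b rho P3) (f1 a b)
                 = rho ^ 2 * (1 / pdist P1 (f1 a b) + 1 / pdist P2 (f1 a b) + 1 / pdist P3 (f1 a b)))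
    by (rewrite !focus_inv_dist by assumption; field; repeat split; lra).
  split; [exact hS | split; [exact hinv |]].
  rewrite hinv, hS. field. lra.
Qed.
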